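(* Let $\mathcal P$ be a finite-dimensional Poisson $n$-Lie algebra over an algebraically closed field of characteristic zero. Then $\mathcal P$ is solvable if and only if the $n$-Lie algebra $\mathcal P_L=(\mathcal P,[-,\dots,-])$ is solvable and the associative algebra $\mathcal P_A=(\mathcal P,\cdot)$ is nilpotent.
   Context: A Poisson $n$-Lie algebra is a commutative associative algebra $(\mathcal P,\cdot)$ with an $n$-linear skew-symmetric bracket satisfying the fundamental identity $[x_1,\dots,x_{n-1},[y_1,\dots,y_n]]=\sum_{i=1}^n[y_1,\dots,[x_1,\dots,x_{n-1},y_i],\dots,y_n]$ and the Leibniz rule $[y\cdot z,x_2,\dots,x_n]=y\cdot[z,x_2,\dots,x_n]+z\cdot[y,x_2,\dots,x_n]$. Products/brackets of subspaces are linear spans. $\mathcal P$ is solvable if $\mathcal P^{(s)}=0$ for some $s$, where $\mathcal P^{(1)}=\mathcal P$, $\mathcal P^{(k+1)}=[\mathcal P^{(k)},\mathcal P^{(k)},\mathcal P,\dots,\mathcal P]+\mathcal P^{(k)}\cdot\mathcal P^{(k)}$. $\mathcal P_L$ is solvable if $L^{(s)}=0$ for some $s$, where $L^{(1)}=\mathcal P$, $L^{(k+1)}=[L^{(k)},L^{(k)},\mathcal P,\dots,\mathcal P]$. $\mathcal P_A$ is nilpotent if all products of some fixed number of elements vanish. *)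

From HB Require Import structures.
From mathcomp Require Import all_boot all_order all_algebra all_fingroup.
Set Implicit Arguments. Unset Strict Implicit. Unset Printing Implicit Defensive.
Import GRing.Theory.
Local Open Scope ring_scope.

Section PoissonNLie.
Variables (F : fieldType) (V : vectType F) (n : nat).
Variable mul : V -> V -> V.
Variable br : ('I_n -> V) -> V.

Definition upd (f : 'I_n -> V) (i : nat) (v : V) : 'I_n -> V :=
  fun k => if (k : nat) == i then v else f k.

Definition comm_assoc_algebra : Prop :=
  [/\ forall a u v w, mul (a *: u + v) w = a *: mul u w + mul v w,
      forall u v, mul u v = mul v u &
      forall u v w, mul u (mul v w) = mul (mul u v) w].

Definition multilinear : Prop :=
  forall (f : 'I_n -> V) (i : 'I_n) (a : F) (u v : V),
    br (upd f i (a *: u + v)) = a *: br (upd f i u) + br (upd f i v).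

Definition skew_symmetric : Prop :=
  forall (f : 'I_n -> V) (s : 'S_n),
    br (fun k => f (s k)) = (-1) ^+ odd_perm s *: br f.

(* [x_1,...,x_{n-1},[y_1,...,y_n]] = sum_i [y_1,...,[x_1,...,x_{n-1},y_i],...,y_n];
   the x's are the first n-1 entries of x (its last entry is ignored). *)
Definition fundamental_identity : Prop :=
  forall (x y : 'I_n -> V),
    br (upd x n.-1 (br y)) = \sum_(i < n) br (upd y i (br (upd x n.-1 (y i)))).

Definition leibniz_rule : Prop :=
  forall (x : 'I_n -> V) (y z : V),
    br (upd x 0 (mul y z)) = mul y (br (upd x 0 z)) + mul z (br (upd x 0 y)).

Definition is_poisson_nlie : Prop :=
  [/\ comm_assoc_algebra, multilinear, skew_symmetric,
      fundamental_identity & leibniz_rule].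

Inductive span (S : V -> Prop) : V -> Prop :=
  | span_gen v : S v -> span S v
  | span0 : span S 0
  | spanD u v : span S u -> span S v -> span S (u + v)
  | spanZ (a : F) v : span S v -> span S (a *: v).

Definition br_sub (A : V -> Prop) : V -> Prop :=
  span (fun v => exists f : 'I_n -> V,
    [/\ forall k : 'I_n, (k : nat) = 0%N -> A (f k),
        forall k : 'I_n, (k : nat) = 1%N -> A (f k) & v = br f]).

Definition mul_sub (A : V -> Prop) : V -> Prop :=
  span (fun v => exists a b, [/\ A a, A b & v = mul a b]).

Definition sum_sub (A B : V -> Prop) : V -> Prop :=
  fun v => exists a b, [/\ A a, B b & v = a + b].

(* derived_P k is P^(k+1) of the paper; derived_L k is L^(k+1) *)
Fixpoint derived_P (k : nat) : V -> Prop :=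
  match k with
  | 0 => fun _ => True
  | k'.+1 => sum_sub (br_sub (derived_P k')) (mul_sub (derived_P k'))
  end.

Fixpoint derived_L (k : nat) : V -> Prop :=
  match k with
  | 0 => fun _ => True
  | k'.+1 => br_sub (derived_L k')
  end.

Definition is_zero_sub (A : V -> Prop) : Prop := forall v, A v -> v = 0.

Definition poisson_solvable : Prop := exists s, is_zero_sub (derived_P s).
Definition nlie_solvable : Prop := exists s, is_zero_sub (derived_L s).

(* all products of N+1 elements vanish (associativity makes bracketing irrelevant) *)
Definition assoc_nilpotent : Prop :=
  exists N : nat, forall (x : V) (xs : seq V), size xs = N -> foldl mul x xs = 0.

End PoissonNLie.

From Pilot Require Import Defs.
From HB Require Import structures.
From mathcomp Require Import all_boot all_order all_algebra all_fingroup.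
From mathcomp Require Import zify.
From Stdlib Require Import FunctionalExtensionality.
Import Defs.
Set Implicit Arguments. Unset Strict Implicit. Unset Printing Implicit Defensive.
Import GRing.Theory.
Local Open Scope ring_scope.

(* Write P_A^m for the span of all products of m elements.  By the Leibniz rule
   and skew-symmetry every P_A^m is an ideal for the bracket.  Forward: the
   derived series of P contains that of P_L, and P_A^(2^k) lies in P^(k+1)
   because a product of 2^k elements splits into a product of two products of
   2^(k-1) elements.  Backward: multilinearity gives P^(k+1) included in
   L^(k+1) + P_A^2, which is P_A^2 once L^(k+1) = 0; and whenever P^(k) lies
   in P_A^m with m >= 2, the Leibniz rule pushes P^(k+1) into P_A^(m+1), so the derived
   series reaches P_A^(N+1) = 0. *)

Section Span.
Variables (F : fieldType) (V : vectType F).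

Record subspace_pred (T : V -> Prop) : Prop := SubspacePred {
  subspace0 : T 0;
  subspaceD : forall u v, T u -> T v -> T (u + v);
  subspaceZ : forall (a : F) v, T v -> T (a *: v) }.

Lemma span_subspace (G : V -> Prop) : subspace_pred (span G).
Proof. by split; [exact: span0 | exact: spanD | exact: spanZ]. Qed.

Lemma span_min (G T : V -> Prop) : subspace_pred T -> (forall v, G v -> T v) ->
  forall v, span G v -> T v.
Proof. by case=> T0 TD TZ GT v; elim; auto. Qed.

Lemma span_mono (G G' : V -> Prop) : (forall v, G v -> G' v) ->
  forall v, span G v -> span G' v.
Proof. by move=> GG'; apply: span_min (span_subspace _) _ => v /GG' /span_gen. Qed.

Lemma span_eq0 (G : V -> Prop) : (forall v, G v -> v = 0) ->
  forall v, span G v -> v = 0.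
Proof.
apply: span_min; split=> [//|u v -> ->|a v ->]; by rewrite ?addr0 ?scaler0.
Qed.

Lemma sum_sub_subspace (A B : V -> Prop) :
  subspace_pred A -> subspace_pred B -> subspace_pred (sum_sub A B).
Proof.
case=> A0 AD AZ [B0 BD BZ]; split.
- by exists 0, 0; rewrite addr0.
- move=> _ _ [a [b [Aa Bb ->]]] [a' [b' [Aa' Bb' ->]]].
  by exists (a + a'), (b + b'); split; auto; rewrite addrACA.
- move=> c _ [a [b [Aa Bb ->]]].
  by exists (c *: a), (c *: b); split; auto; rewrite scalerDr.
Qed.

Lemma sum_subl (A B : V -> Prop) a : subspace_pred B -> A a -> sum_sub A B a.
Proof. by move=> [B0 _ _] Aa; exists a, 0; rewrite addr0. Qed.

Lemma sum_subr (A B : V -> Prop) b : subspace_pred A -> B b -> sum_sub A B b.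
Proof. by move=> [A0 _ _] Bb; exists 0, b; rewrite add0r. Qed.

End Span.

Section AssociativePowers.
Variables (F : fieldType) (V : vectType F) (mul : V -> V -> V).
Hypothesis mul_comm_assoc : comm_assoc_algebra mul.

Lemma mulC u v : mul u v = mul v u.
Proof. by case: mul_comm_assoc. Qed.

Lemma mulA u v w : mul u (mul v w) = mul (mul u v) w.
Proof. by case: mul_comm_assoc. Qed.

Lemma mulDl u v w : mul (u + v) w = mul u w + mul v w.
Proof. by case: mul_comm_assoc => linl _ _; have := linl 1 u v w; rewrite !scale1r. Qed.

Lemma mul0l w : mul 0 w = 0.
Proof. by apply: (addIr (mul 0 w)); rewrite -mulDl !add0r. Qed.

Lemma mulZl (a : F) u w : mul (a *: u) w = a *: mul u w.
Proof. by case: mul_comm_assoc => linl _ _; rewrite -[a *: u]addr0 linl mul0l addr0. Qed.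

(* [apow k] is P_A^(k+1): it is spanned by the products of k+1 elements. *)
Fixpoint apow (k : nat) : V -> Prop :=
  if k is k'.+1 then span (fun v => exists a b, apow k' b /\ v = mul a b)
  else fun _ => True.

Lemma apow_subspace k : subspace_pred (apow k).
Proof. by case: k => [|k] /=; [split | exact: span_subspace]. Qed.

Lemma apow_mull k a b : apow k b -> apow k.+1 (mul a b).
Proof. by move=> Pb; apply: span_gen; exists a, b. Qed.

Lemma apow_mulr k a b : apow k b -> apow k.+1 (mul b a).
Proof. by rewrite mulC; apply: apow_mull. Qed.

Lemma apowS_apow1 k v : apow k.+1 v -> apow 1 v.
Proof. by apply: span_mono => _ [a [b [_ ->]]]; exists a, b. Qed.

Lemma mul_sub_apow1 (X : V -> Prop) v : mul_sub mul X v -> apow 1 v.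
Proof. by apply: span_mono => _ [a [b [_ _ ->]]]; exists a, b. Qed.

Lemma mul_span_min a (G T : V -> Prop) : subspace_pred T ->
  (forall g, G g -> T (mul a g)) -> forall b, span G b -> T (mul a b).
Proof.
case=> T0 TD TZ GT b; elim=> //.
- by rewrite mulC mul0l.
- by move=> u w _ Tu _ Tw; rewrite mulC mulDl mulC (mulC w); auto.
- by move=> c w _ Tw; rewrite mulC mulZl mulC; auto.
Qed.

Lemma apow_foldl x xs : apow (size xs) (foldl mul x xs).
Proof.
elim/last_ind: xs => [//|xs a IH].
by rewrite foldl_rcons size_rcons; apply: apow_mulr.
Qed.

Lemma apow_span_foldl k v : apow k v ->
  span (fun w => exists x xs, size xs = k /\ w = foldl mul x xs) v.
Proof.
elim: k v => [|k IH] v /=; first by move=> _; apply: span_gen; exists v, [::].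
apply: (span_min (span_subspace _)) => _ [a [b [Pb ->]]].
apply: mul_span_min (span_subspace _) _ _ (IH _ Pb) => _ [x [xs [<- ->]]].
by apply: span_gen; exists x, (rcons xs a); rewrite size_rcons foldl_rcons mulC.
Qed.

Lemma apow_split i j v : apow (i + j).+1 v ->
  span (fun w => exists u x, [/\ apow i u, apow j x & w = mul u x]) v.
Proof.
elim: i v => [|i IH] v /=.
  by apply: span_mono => _ [a [b [Pb ->]]]; exists a, b.
apply: (span_min (span_subspace _)) => _ [a [b [Pb ->]]].
apply: mul_span_min (span_subspace _) _ _ (IH _ Pb) => _ [u [x [Pu Px ->]]].
by apply: span_gen; exists (mul a u), x; rewrite mulA; split; first exact: apow_mull.
Qed.

Lemma apow_derived_P n (br : ('I_n -> V) -> V) k v :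
  apow (2 ^ k).-1 v -> derived_P mul br k v.
Proof.
elim: k v => [//|k IH] v.
have -> : (2 ^ k.+1).-1 = ((2 ^ k).-1 + (2 ^ k).-1).+1%N.
  by have := expn_gt0 2 k; rewrite expnS; lia.
move/apow_split => Pv; apply: sum_subr; first exact: span_subspace.
by move: v Pv; apply: span_mono => _ [u [x [/IH Pu /IH Px ->]]]; exists u, x.
Qed.

End AssociativePowers.

Section BracketIdeals.
Variables (F : fieldType) (V : vectType F) (n : nat).
Variables (mul : V -> V -> V) (br : ('I_n -> V) -> V).

Lemma derived_L_sub_P k v : derived_L br k v -> derived_P mul br k v.
Proof.
elim: k v => [//|k IH] v Lv; apply: sum_subl; first exact: span_subspace.
by move: v Lv; apply: span_mono => _ [f [L0 L1 ->]]; exists f;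
  split=> // j; [move/L0 | move/L1]; exact: IH.
Qed.

Hypotheses (mul_comm_assoc : comm_assoc_algebra mul)
  (br_multilinear : multilinear br) (br_skew : skew_symmetric br)
  (br_leibniz : leibniz_rule mul br).

Lemma upd_id (f : 'I_n -> V) (i : 'I_n) : upd f i (f i) = f.
Proof. by apply: functional_extensionality => k; rewrite /upd; case: eqP => // /val_inj ->. Qed.

Lemma br_updD (f : 'I_n -> V) (i : 'I_n) u v :
  br (upd f i (u + v)) = br (upd f i u) + br (upd f i v).
Proof. by have := br_multilinear f i 1 u v; rewrite !scale1r. Qed.

Lemma br_upd0 (f : 'I_n -> V) (i : 'I_n) : br (upd f i 0) = 0.
Proof. by apply: (addIr (br (upd f i 0))); rewrite -br_updD !add0r. Qed.

Lemma br_upd_split (i : 'I_n) (f : 'I_n -> V) l p : f i = l + p ->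
  br f = br (upd f i l) + br (upd f i p).
Proof. by move=> fi; rewrite -{1}(upd_id f i) fi br_updD. Qed.

Lemma br_upd_span_min (i : 'I_n) (f : 'I_n -> V) (G T : V -> Prop) :
  subspace_pred T -> (forall v, G v -> T (br (upd f i v))) ->
  forall v, span G v -> T (br (upd f i v)).
Proof.
case=> T0 TD TZ GT v; elim=> //.
- by rewrite br_upd0.
- by move=> u w _ Tu _ Tw; rewrite br_updD; auto.
- by move=> a w _ Tw; rewrite -[a *: w]addr0 br_multilinear br_upd0 addr0; auto.
Qed.

Lemma br_apow_first k (i0 : 'I_n) (f : 'I_n -> V) : (i0 : nat) = 0%N ->
  apow mul k (f i0) -> apow mul k (br f).
Proof.
move=> i0E; elim: k f => [//|k IH] f; rewrite -{2}(upd_id f i0); move: (f i0) => v.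
apply: br_upd_span_min; first exact: apow_subspace.
move=> _ [a [b [Pb ->]]]; rewrite i0E br_leibniz.
apply: subspaceD (apow_subspace _ _) _ _ _ _; last exact: apow_mulr.
by apply/apow_mull/IH; rewrite /upd i0E.
Qed.

(* Skew-symmetry moves any slot to the first one, where the Leibniz rule applies. *)
Lemma br_apow k (i : 'I_n) (f : 'I_n -> V) : apow mul k (f i) -> apow mul k (br f).
Proof.
move=> Pfi; pose i0 : 'I_n := Ordinal (leq_ltn_trans (leq0n i) (ltn_ord i)).
pose s := tperm i0 i.
have -> : br f = (-1) ^+ odd_perm s *: br (fun k => f (s k)).
  by rewrite -br_skew; congr br; apply: functional_extensionality => j; rewrite tpermK.
apply: subspaceZ (apow_subspace _ _) _ _ _.
by apply: (@br_apow_first _ i0) => //; rewrite /s tpermL.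
Qed.

Section TwoSlots.
Hypothesis n_ge2 : (2 <= n)%N.
Let i0 : 'I_n := Ordinal (ltnW n_ge2).
Let i1 : 'I_n := Ordinal n_ge2.

Lemma br_apowS k (f : 'I_n -> V) :
  apow mul 1 (f i0) -> apow mul k (f i1) -> apow mul k.+1 (br f).
Proof.
move=> P0 P1; rewrite -(upd_id f i0); move: (f i0) P0 => v.
apply: br_upd_span_min; first exact: apow_subspace.
move=> _ [a [b [_ ->]]]; rewrite br_leibniz.
by apply: subspaceD (apow_subspace _ _) _ _ _ _; apply/apow_mull/(br_apow (i:=i1)).
Qed.

Lemma derived_P_sub_L_apow1 k v :
  derived_P mul br k v -> sum_sub (derived_L br k) (apow mul 1) v.
Proof.
elim: k v => [|k IH] v.
  by move=> _; apply: sum_subl; first exact: apow_subspace.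
have T_sub : subspace_pred (sum_sub (br_sub br (derived_L br k)) (apow mul 1)).
  exact: sum_sub_subspace (span_subspace _) (apow_subspace _ 1).
move=> [a [b [Pa /mul_sub_apow1 Pb ->]]].
apply: (subspaceD T_sub); last exact: sum_subr (span_subspace _) Pb.
move: a Pa; apply: (span_min T_sub) => _ [f [P0 P1 ->]].
have [l0 [p0 [L0 A0 E0]]] := IH _ (P0 i0 erefl).
have [l1 [p1 [L1 A1 E1]]] := IH _ (P1 i1 erefl).
pose g := upd f i0 l0.
rewrite (br_upd_split E0) -/g (@br_upd_split i1 g l1 p1 E1).
apply: (subspaceD T_sub); first apply: (subspaceD T_sub).
- apply: sum_subl; first exact: apow_subspace.
  by apply: span_gen; exists (upd g i1 l1); split=> // j; rewrite /g /upd => ->.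
- by apply: sum_subr; [exact: span_subspace | apply: (br_apow (i:=i1)); rewrite /upd].
- by apply: sum_subr; [exact: span_subspace | apply: (br_apow (i:=i0)); rewrite /upd].
Qed.

Lemma derived_P_apowS m (X : V -> Prop) : (forall v, X v -> apow mul m.+1 v) ->
  forall v, sum_sub (br_sub br X) (mul_sub mul X) v -> apow mul m.+2 v.
Proof.
move=> XP _ [a [b [Pa Pb ->]]]; apply: subspaceD (apow_subspace _ _) _ _ _ _.
- move: a Pa; apply: (span_min (apow_subspace _ _)) => _ [f [P0 P1 ->]].
  apply: br_apowS; [exact: apowS_apow1 (XP _ (P0 i0 erefl)) | exact: XP _ (P1 i1 erefl)].
- move: b Pb; apply: (span_min (apow_subspace _ _)) => _ [x [y [_ Py ->]]].
  exact: apow_mull (XP _ Py).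
Qed.

Lemma nlie_nilpotent_poisson_solvable :
  nlie_solvable br /\ assoc_nilpotent mul -> poisson_solvable mul br.
Proof.
move=> [[s L0] [N A0]].
have apowN0 v : apow mul N v -> v = 0.
  move/(apow_span_foldl mul_comm_assoc); apply: span_eq0.
  by move=> _ [x [xs [/A0 ? ->]]].
have derived_apow j v : derived_P mul br (s + j) v -> apow mul j.+1 v.
  elim: j v => [|j IH] v; last by rewrite addnS; apply: derived_P_apowS.
  by rewrite addn0 => /derived_P_sub_L_apow1 [l [p [/L0 -> Pp ->]]]; rewrite add0r.
exists (s + N)%N => v /derived_apow; apply: span_eq0 => _ [a [b [/apowN0 -> ->]]].
by rewrite (mulC mul_comm_assoc) (mul0l mul_comm_assoc).
Qed.

End TwoSlots.

Lemma poisson_solvable_nlie_nilpotent :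
  poisson_solvable mul br -> nlie_solvable br /\ assoc_nilpotent mul.
Proof.
move=> [s P0]; split; first by exists s => v /derived_L_sub_P /P0.
exists (2 ^ s).-1 => x xs size_xs; apply: P0; apply: (apow_derived_P mul_comm_assoc).
rewrite -size_xs; exact: apow_foldl.
Qed.

End BracketIdeals.

Theorem corollary5p10 (F : closedFieldType) (charF0 : [pchar F] =i pred0)
  (V : vectType F) (n : nat) (hn : (2 <= n)%N)
  (mul : V -> V -> V) (br : ('I_n -> V) -> V)
  (hP : is_poisson_nlie mul br) :
  poisson_solvable mul br <-> nlie_solvable br /\ assoc_nilpotent mul.
Proof.
case: hP => mul_comm_assoc br_multilinear br_skew _ br_leibniz.
split; first exact: poisson_solvable_nlie_nilpotent.
by apply: nlie_nilpotent_poisson_solvable.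
Qed.
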